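(* Let $\mathbb{A}\in\mathbb{C}^{n\times n}$, $\mathbf{f}_1\in\mathbb{C}^n$, and $\mathbf{f}_{i+1}=\mathbb{A}\mathbf{f}_i$ for $i=1,\dots,m$. Assume $\mathbf{X}_m=(\mathbf{f}_1,\dots,\mathbf{f}_m)\in\mathbb{C}^{n\times m}$ has full column rank, and let $\mathcal{K}_m=\operatorname{span}\{\mathbf{f}_1,\dots,\mathbf{f}_m\}$. Let $\mathbf{c}=(c_1,\dots,c_m)^T=\mathbf{X}_m^{\dagger}\mathbf{f}_{m+1}$ (the least squares coefficients) and $\mathbf{r}_{m+1}=\mathbf{f}_{m+1}-\mathbf{X}_m\mathbf{c}$. Let $C_m$ be the $m\times m$ companion matrix with ones on the first subdiagonal, last column equal to $\mathbf{c}$, and zeros elsewhere, so that $\mathbb{A}\mathbf{X}_m=\mathbf{X}_mC_m+\mathbf{r}_{m+1}\mathbf{e}_m^T$ with $\mathbf{e}_m=(0,\dots,0,1)^T$. Assume the eigenvalues $\lambda_1,\dots,\lambda_m$ of $C_m$ are pairwise distinct, and let $\mathbb{V}_m=(\lambda_i^{j-1})_{i,j=1}^m$ be the corresponding Vandermonde matrix. Then the columns of $\widehat{W}_m=\mathbf{X}_m\mathbb{V}_m^{-1}$ are Ritz vectors of $\mathbb{A}$ with respect to $\mathcal{K}_m$, the $j$-th column $\widehat{W}_m(:,j)$ having Ritz value $\lambda_j$, and for each $j=1,\dots,m$, $$\frac{\|\mathbb{A}\widehat{W}_m(:,j)-\lambda_j\widehat{W}_m(:,j)\|_2}{\|\widehat{W}_m(:,j)\|_2}=\frac{\|\mathbf{r}_{m+1}\|_2}{\|\widehat{W}_m(:,j)\|_2}\prod_{k=1,k\neq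 j}^m\frac{1}{|\lambda_j-\lambda_k|}.$$
   Context: $\mathbf{X}_m^\dagger$ denotes the Moore–Penrose pseudoinverse, so $\mathbf{X}_m^*\mathbf{r}_{m+1}=0$. A pair $(\lambda,w)$ with $0\neq w\in\mathcal{K}_m$ is a Ritz pair (Ritz value $\lambda$, Ritz vector $w$) of $\mathbb{A}$ with respect to $\mathcal{K}_m$ if $\mathbb{A}w-\lambda w$ is orthogonal to $\mathcal{K}_m$, i.e. $\lambda$ is an eigenvalue of the Rayleigh quotient $\mathbf{X}_m^\dagger\mathbb{A}\mathbf{X}_m=C_m$ and $w=\mathbf{X}_m y$ for a corresponding eigenvector $y$. *)

(* Complex numbers: an arbitrary numClosedFieldType C
   (e.g. algC, or complex R for a real closed field R). *)
From HB Require Import structures.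
From mathcomp Require Import all_boot all_order all_algebra.
Set Implicit Arguments. Unset Strict Implicit. Unset Printing Implicit Defensive.
Import Order.TTheory GRing.Theory Num.Theory.
Local Open Scope ring_scope.

Section Defs.
Variable C : numClosedFieldType.

Definition ctrmx (p q : nat) (M : 'M[C]_(p, q)) : 'M[C]_(q, p) :=
  (map_mx Num.conj M)^T.

Definition moore_penrose (p q : nat) (X : 'M[C]_(p, q)) (Y : 'M[C]_(q, p)) :=
  [/\ X *m Y *m X = X, Y *m X *m Y = Y,
      ctrmx (X *m Y) = X *m Y & ctrmx (Y *m X) = Y *m X].

(* Krylov matrix X_m = (f_1, A f_1, ..., A^(m-1) f_1); column j (0-based) is A^j f_1 *)
Definition krylov_mx (n m : nat) (A : 'M[C]_n) (f1 : 'cV[C]_n) : 'M[C]_(n, m) :=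
  \matrix_(i < n, j < m) ((A ^+ j) *m f1) i 0.

Definition companion_mx (m : nat) (c : 'cV[C]_m) : 'M[C]_m :=
  \matrix_(i < m, j < m)
    (if j.+1 == m then c i 0 else ((i : nat) == j.+1)%:R).

Definition vandermonde_mx (m : nat) (lam : 'I_m -> C) : 'M[C]_m :=
  \matrix_(i < m, j < m) (lam i ^+ j).

Definition cinner (n : nat) (v u : 'cV[C]_n) : C :=
  \sum_(i < n) (v i 0)^* * u i 0.

Definition norm2 (n : nat) (v : 'cV[C]_n) : C :=
  sqrtC (\sum_(i < n) `|v i 0| ^+ 2).

Definition in_colspace (n m : nat) (X : 'M[C]_(n, m)) (w : 'cV[C]_n) : Prop :=
  exists y : 'cV[C]_m, w = X *m y.

Definition ritz_pair (n m : nat) (A : 'M[C]_n) (X : 'M[C]_(n, m))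
    (lam : C) (w : 'cV[C]_n) : Prop :=
  [/\ w != 0, in_colspace X w &
      forall v, in_colspace X v -> cinner v (A *m w - lam *: w) = 0].

End Defs.

(* Since f_(i+1) = A f_i, the Krylov matrix satisfies A X = X C + r e_m^T, where
   C is the companion matrix of x^m - sum_l c_l x^l.  Each lambda_i is a root of
   that polynomial, so the Vandermonde matrix V diagonalises C:
   V C = diag(lambda) V.  Hence A (X V^-1) = (X V^-1) diag(lambda) + r (e_m^T V^-1),
   i.e. the residual of the j-th column of W = X V^-1 is (V^-1)_(m,j) r.  This is
   orthogonal to K_m because r is a least-squares residual, and (V^-1)_(m,j) is
   the leading coefficient of the j-th Lagrange polynomial of the nodes lambda,
   namely 1 / prod_(k <> j) (lambda_j - lambda_k). *)

From HB Require Import structures.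
From mathcomp Require Import all_boot all_order all_algebra.
Set Implicit Arguments. Unset Strict Implicit. Unset Printing Implicit Defensive.
Import Order.TTheory GRing.Theory Num.Theory.
Local Open Scope ring_scope.

Section Field.
Variable F : fieldType.

Lemma lagrange_coef_top (m : nat) (lam : 'I_m.+1 -> F) (p : {poly F}) j :
  injective lam -> (size p <= m.+1)%N ->
  (forall i, p.[lam i] = (i == j)%:R) ->
  p`_m * \prod_(k < m.+1 | k != j) (lam j - lam k) = 1.
Proof.
move=> lam_inj size_p p_lam.
set q := \prod_(k < m.+1 | k != j) ('X - (lam k)%:P).
have size_q : size q = m.+1.
  rewrite size_prod => [|k _]; last by rewrite polyXsubC_eq0.
  under eq_bigr do rewrite size_XsubC.
  by rewrite sum_nat_const cardC1 card_ord /= muln2 -addnn -addSn addnK.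
have q_lam i : q.[lam i] = (i == j)%:R * \prod_(k < m.+1 | k != j) (lam j - lam k).
  rewrite horner_prod; have [->|ij] := eqVneq i j.
    by rewrite mul1r; apply: eq_bigr => k _; rewrite hornerXsubC.
  by rewrite mul0r (bigD1 i) //= hornerXsubC subrr mul0r.
have {}p_q : q.[lam j] *: p = q.
  apply/eqP; rewrite -subr_eq0; apply/eqP.
  apply: (@roots_geq_poly_eq0 _ _ [seq lam i | i <- enum 'I_m.+1]).
  - apply/allP => _ /mapP [i _ ->].
    by rewrite /root !hornerE p_lam !q_lam eqxx mul1r mulrC subrr.
  - by rewrite map_inj_uniq ?enum_uniq.
  rewrite size_map size_enum_ord (leq_trans (size_polyD _ _)) //.
  by rewrite size_polyN size_q geq_max leqnn (leq_trans (size_scale_leq _ _)).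
have q_top : lead_coef q = 1 := lead_coef_prod_XsubC _ _ _.
have q_j := q_lam j; rewrite eqxx mul1r in q_j.
by rewrite mulrC -q_j -coefZ p_q -q_top lead_coefE size_q.
Qed.

Lemma unitmx_vandermonde (m : nat) (lam : 'I_m -> F) :
  injective lam -> \matrix_(i < m, k < m) lam i ^+ k \in unitmx.
Proof.
move=> lam_inj.
have -> : \matrix_(i < m, k < m) lam i ^+ k = (Vandermonde m (\row_i lam i))^T.
  by apply/matrixP => i k; rewrite !mxE.
rewrite unitmx_tr unitmxE det_Vandermonde unitfE.
apply/prodf_neq0 => i _; apply/prodf_neq0 => k ik.
by rewrite !mxE subr_eq0 (inj_eq lam_inj) -val_eqE neq_ltn ik orbT.
Qed.

Lemma invmx_vandermonde_last (m : nat) (lam : 'I_m.+1 -> F) j :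
  injective lam ->
  invmx (\matrix_(i < m.+1, k < m.+1) lam i ^+ k) ord_max j
    * \prod_(k < m.+1 | k != j) (lam j - lam k) = 1.
Proof.
move=> lam_inj; set V := \matrix_(i, k) lam i ^+ k.
have V_unit : V \in unitmx := unitmx_vandermonde lam_inj.
have -> : invmx V ord_max j = (\poly_(k < m.+1) invmx V (inord k) j)`_m.
  by rewrite coef_poly ltnSn; congr (invmx V _ j); apply: val_inj; rewrite /= inordK.
apply: lagrange_coef_top (size_poly _ _) _ => // i.
have := congr1 (fun M : 'M_m.+1 => M i j) (mulmxV V_unit).
rewrite !mxE horner_poly => <-.
by apply: eq_bigr => k _; rewrite inord_val mxE mulrC.
Qed.

Lemma col_mul_unitmx_neq0 n m (X : 'M[F]_(n, m)) (B : 'M_m) j :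
  \rank X = m -> B \in unitmx -> col j (X *m B) != 0.
Proof.
move=> rank_X B_unit.
have X_free : row_free X^T by rewrite /row_free mxrank_tr rank_X.
have B_free : row_free B^T by rewrite row_free_unit unitmx_tr.
rewrite colE -trmx_eq0 !trmx_mul mulmxA mulmx_free_eq0 // mulmx_free_eq0 //.
by rewrite trmx_eq0; apply/eqP => /matrixP /(_ j 0) /eqP; rewrite !mxE !eqxx oner_eq0.
Qed.

Lemma residual_col_mul_invmx n m (A : 'M[F]_n) (X : 'M_(n, m.+1))
    (H V : 'M_m.+1) (d : 'rV_m.+1) (r : 'cV_n) j :
  A *m X = X *m H + r *m delta_mx 0 ord_max ->
  V *m H = diag_mx d *m V -> V \in unitmx ->
  A *m col j (X *m invmx V) - d 0 j *: col j (X *m invmx V)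
    = invmx V ord_max j *: r.
Proof.
move=> AX VH V_unit.
have HV : H *m invmx V = invmx V *m diag_mx d.
  by rewrite -[LHS](mulKmx V_unit) [V *m _]mulmxA VH -mulmxA mulmxV // mulmx1.
have AW : A *m (X *m invmx V)
    = X *m invmx V *m diag_mx d + r *m row ord_max (invmx V).
  by rewrite mulmxA AX mulmxDl -!mulmxA HV rowE.
apply/colP => i; rewrite !colE mulmxA -colE AW -colE mul_mx_diag !mxE big_ord1 !mxE.
by rewrite [_ * d 0 j]mulrC addrAC subrr add0r mulrC.
Qed.

End Field.

Lemma char_poly_trmx (R : comNzRingType) n (M : 'M[R]_n) :
  char_poly M^T = char_poly M.
Proof.
by rewrite /char_poly /char_poly_mx -det_tr linearB/= tr_scalar_mx -map_trmx trmxK.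
Qed.

Lemma size_sum_scale_Xn (R : nzRingType) m (a : 'I_m -> R) :
  (size (\sum_(l < m) a l *: 'X^l)%R <= m)%N.
Proof.
apply: (big_ind (fun p : {poly R} => size p <= m)%N) => [|p q p_le q_le|l _].
- by rewrite size_poly0.
- by rewrite (leq_trans (size_polyD _ _)) // geq_max p_le.
- by rewrite (leq_trans (size_scale_leq _ _)) // size_polyXn.
Qed.

Section NumClosedField.
Variable C : numClosedFieldType.

Lemma ctrmxM p q s (M : 'M[C]_(p, q)) (N : 'M_(q, s)) :
  ctrmx (M *m N) = ctrmx N *m ctrmx M.
Proof. by rewrite /ctrmx map_mxM trmx_mul. Qed.

Lemma cinnerE n (v u : 'cV[C]_n) : cinner v u = (ctrmx v *m u) 0 0.
Proof. by rewrite mxE; apply: eq_bigr => i _; rewrite !mxE. Qed.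

Lemma norm2Z n (a : C) (v : 'cV[C]_n) : norm2 (a *: v) = `|a| * norm2 v.
Proof.
rewrite /norm2; under eq_bigr do rewrite mxE normrM exprMn.
rewrite -mulr_sumr sqrtCM ?sqrCK ?nnegrE ?exprn_ge0 //.
by apply: sumr_ge0 => i _; rewrite exprn_ge0.
Qed.

Lemma moore_penrose_residual_orth p q (X : 'M[C]_(p, q)) Y (v : 'cV_p) :
  moore_penrose X Y -> ctrmx X *m (v - X *m (Y *m v)) = 0.
Proof.
case=> XYX _ XY_herm _.
have XXY : ctrmx X *m X *m Y = ctrmx X by rewrite -mulmxA -XY_herm -ctrmxM XYX.
by rewrite mulmxBr !mulmxA XXY subrr.
Qed.

Lemma ritz_pair_galerkin n m (A : 'M[C]_n) (X : 'M_(n, m)) lam w :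
  w != 0 -> in_colspace X w -> ctrmx X *m (A *m w - lam *: w) = 0 ->
  ritz_pair A X lam w.
Proof.
move=> w_neq0 w_in res_orth; split=> // _ [y ->].
by rewrite cinnerE ctrmxM -mulmxA res_orth mulmx0 mxE.
Qed.

Lemma char_poly_companion_mx m (c : 'cV[C]_m) :
  char_poly (companion_mx c) = 'X^m - \sum_(l < m) c l 0 *: 'X^l.
Proof.
set p := 'X^m - _.
have size_low : (size (- \sum_(l < m) c l 0 *: 'X^l)%R < size ('X^m : {poly C}))%N.
  by rewrite size_polyN size_polyXn ltnS size_sum_scale_Xn.
have p_monic : p \is monic by rewrite monicE lead_coefDl ?lead_coefXn.
have size_p : (size p).-1 = m by rewrite size_polyDl // size_polyXn.
have := companionmxK p_monic; rewrite /companionmx size_p => <-.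
rewrite -char_poly_trmx; congr char_poly; apply/matrixP => i j; rewrite !mxE.
rewrite -[(j == m.-1 :> nat)]eqSS prednK; last exact: leq_ltn_trans (leq0n _) (ltn_ord j).
case: ifP => _; last by rewrite eq_sym.
rewrite coefB coefXn ltn_eqF // sub0r opprK coef_sum (bigD1 i) //=.
rewrite coefZ coefXn eqxx mulr1 big1 ?addr0 // => l.
by rewrite coefZ coefXn -val_eqE eq_sym => /negbTE ->; rewrite mulr0.
Qed.

Lemma root_char_poly_companion_mx m (c : 'cV[C]_m) x :
  root (char_poly (companion_mx c)) x = (x ^+ m == \sum_(l < m) c l 0 * x ^+ l).
Proof.
rewrite char_poly_companion_mx /root !hornerE horner_sum subr_eq0.
by under [X in _ == X]eq_bigr do rewrite hornerZ hornerXn.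
Qed.

Lemma mul_companion_mx_lift p m (M : 'M[C]_(p, m.+1)) c i (b : 'I_m) :
  (M *m companion_mx c) i (lift ord_max b) = M i (lift ord0 b).
Proof.
rewrite mxE (bigD1 (lift ord0 b)) //= mxE lift_max lift0 eqSS ltn_eqF //.
rewrite eqxx mulr1 big1 ?addr0 // => l l_neq; rewrite mxE lift_max eqSS ltn_eqF //.
by rewrite -lift0 val_eqE (negbTE l_neq) mulr0.
Qed.

Lemma mul_companion_mx_max p m (M : 'M[C]_(p, m.+1)) c i :
  (M *m companion_mx c) i ord_max = (M *m c) i 0.
Proof. by rewrite !mxE; apply: eq_bigr => l _; rewrite mxE eqxx. Qed.

Lemma vandermonde_mx_companion m (lam : 'I_m.+1 -> C) (c : 'cV_m.+1) :
  (forall i, root (char_poly (companion_mx c)) (lam i)) ->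
  vandermonde_mx lam *m companion_mx c
    = diag_mx (\row_i lam i) *m vandermonde_mx lam.
Proof.
move=> lam_root; apply/matrixP => i b.
case: (unliftP ord_max b) => [b'|] ->.
  by rewrite mul_companion_mx_lift mul_diag_mx !mxE -exprS lift0 lift_max.
have := lam_root i; rewrite root_char_poly_companion_mx => /eqP lam_i.
rewrite mul_companion_mx_max mul_diag_mx !mxE -exprS /= lam_i.
by apply: eq_bigr => l _; rewrite mxE mulrC.
Qed.

Lemma krylov_mx_arnoldi n m (A : 'M[C]_n) f1 (c : 'cV_m.+1) :
  A *m krylov_mx m.+1 A f1 = krylov_mx m.+1 A f1 *m companion_mx c
    + (A ^+ m.+1 *m f1 - krylov_mx m.+1 A f1 *m c) *m delta_mx 0 ord_max.
Proof.
apply/matrixP => i b; rewrite [(_ + _ : 'M_(n, m.+1)) i b]mxE.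
have -> : (A *m krylov_mx m.+1 A f1) i b = (A ^+ b.+1 *m f1) i 0.
  by rewrite exprS -mulmxA !mxE; apply: eq_bigr => l _; rewrite mxE.
rewrite [(_ *m delta_mx _ _ : 'M_(n, m.+1)) i b]mxE big_ord1 [delta_mx _ _ _ _]mxE /=.
case: (unliftP ord_max b) => [b'|] ->.
  rewrite mul_companion_mx_lift eq_sym (negbTE (neq_lift _ _)) mulr0 addr0.
  by rewrite [krylov_mx _ _ _ _ _]mxE lift0 lift_max.
rewrite mul_companion_mx_max eqxx mulr1 [(_ - _ : 'cV_n) _ _]mxE.
by rewrite [(- _ : 'cV_n) _ _]mxE addrCA subrr addr0.
Qed.

End NumClosedField.

Theorem mainTheorem1 (C : numClosedFieldType) (n m : nat)
    (A : 'M[C]_n) (f1 : 'cV[C]_n) (Xdag : 'M[C]_(m, n)) (lam : 'I_m -> C) :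
  let X := krylov_mx m A f1 in
  let fm1 := (A ^+ m) *m f1 in
  \rank X = m ->
  moore_penrose X Xdag ->
  let c := Xdag *m fm1 in
  let r := fm1 - X *m c in
  let Cm := companion_mx c in
  char_poly Cm = \prod_(i < m) ('X - (lam i)%:P) ->
  injective lam ->
  let W := X *m invmx (vandermonde_mx lam) in
  forall j : 'I_m,
    ritz_pair A X (lam j) (col j W) /\
    norm2 (A *m col j W - lam j *: col j W) / norm2 (col j W)
    = norm2 r / norm2 (col j W) *
      \prod_(k < m | k != j) (1 / `|lam j - lam k|).
Proof.
case: m Xdag lam => [|m] Xdag lam; first by move=> ? ? ? ? ? ? ? ? ? ? [] [].
move=> X fm1 rank_X X_pinv c r Cm char_Cm lam_inj W j.
have lam_root i : root (char_poly Cm) (lam i).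
  by rewrite char_Cm /root horner_prod (bigD1 i) //= hornerXsubC subrr mul0r.
have V_unit : vandermonde_mx lam \in unitmx := unitmx_vandermonde lam_inj.
have residual :
    A *m col j W - lam j *: col j W = invmx (vandermonde_mx lam) ord_max j *: r.
  have := residual_col_mul_invmx j (krylov_mx_arnoldi A f1 c)
    (vandermonde_mx_companion lam_root) V_unit.
  by rewrite mxE.
split.
  apply: ritz_pair_galerkin; first by rewrite col_mul_unitmx_neq0 ?unitmx_inv.
    by exists (col j (invmx (vandermonde_mx lam))); rewrite !colE mulmxA.
  by rewrite residual -scalemxAr moore_penrose_residual_orth // scaler0.
have /mulr1_eq a_inv := invmx_vandermonde_last j lam_inj.
rewrite residual norm2Z -[invmx _ _ _]invrK a_inv normfV normr_prod -prodfV.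
rewrite [RHS]mulrC mulrA; congr (_ * _ / _).
by apply: eq_bigr => k _; rewrite div1r.
Qed.
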